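(* For any distributions $P,Q,R$ and any $n\geq 1$, if $X_1,\dots,X_n$ are i.i.d. from $R$, then $$\mathrm{Var}\big(\mathrm{T}(P,Q,X^n)\big) \leq \frac{55}{n}\max\big(\mathrm{H}^2(P,R),\,\mathrm{H}^2(Q,R)\big).$$
   Context: Distributions $P,Q,R$ are probability distributions on a measurable space $\mathcal{X}$, identified with their densities with respect to a common $\sigma$-finite reference measure $\mu$ (e.g. Lebesgue measure, or counting measure in the discrete case). All integrals and norms are taken with respect to $\mu$, with $\|U\|_p = (\int |U|^p\, d\mu)^{1/p}$. The Hellinger distance is $\mathrm{H}(P,Q) = \frac{1}{\sqrt{2}}\|\sqrt{P}-\sqrt{Q}\|_2$. For a sample $X^n=(X_1,\dots,X_n)$, the test statistic is $$\mathrm{T}(P,Q,X^n) = \frac{1}{n}\sum_{i=1}^n \frac{P(X_i)-Q(X_i)}{P(X_i)+Q(X_i)},$$ where a summand is interpreted as $0$ whenever $P(X_i)+Q(X_i)=0$. *)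

From mathcomp Require Import all_boot all_order all_algebra.
From mathcomp Require Import all_classical all_reals all_analysis.
Set Implicit Arguments. Unset Strict Implicit. Unset Printing Implicit Defensive.
Import Order.TTheory GRing.Theory Num.Theory.
Local Open Scope classical_set_scope.
Local Open Scope ring_scope.

Section defs.
Context d (X : measurableType d) (R : realType).

Definition is_density (mu : {measure set X -> \bar R}) (f : X -> R) : Prop :=
  [/\ measurable_fun setT f, (forall x, 0 <= f x) &
      (\int[mu]_x (f x)%:E = 1)%E].

Definition hellinger2 (mu : {measure set X -> \bar R}) (P Q : X -> R) : \bar R :=
  ((2^-1)%:E * \int[mu]_x (((Num.sqrt (P x) - Num.sqrt (Q x)) ^+ 2)%:E))%E.

Definition test_summand (P Q : X -> R) (x : X) : R :=
  if P x + Q x == 0 then 0 else (P x - Q x) / (P x + Q x).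

Definition test_stat (n : nat) (P Q : X -> R) (xs : 'I_n -> X) : R :=
  n%:R^-1 * \sum_(i < n) test_summand P Q (xs i).

Definition iid_with_density dO (Omega : measurableType dO)
  (Pr : probability Omega R) (n : nat) (Xs : 'I_n -> Omega -> X)
  (mu : {measure set X -> \bar R}) (Rd : X -> R) : Prop :=
  [/\ (forall i, measurable_fun setT (Xs i)),
      (forall i (A : set X), measurable A ->
          Pr (Xs i @^-1` A) = (\int[mu]_(x in A) (Rd x)%:E)%E) &
      (forall (J : {set 'I_n}) (A : 'I_n -> set X),
          (forall i, measurable (A i)) ->
          Pr [set w | forall i, i \in J -> A i (Xs i w)] =
          (\prod_(i in J) Pr (Xs i @^-1` A i))%E)].

End defs.

(* Write f = test_summand P Q, so that T = n^-1 * sum_i f(X_i) and |f| <= 1.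
   The proof has three independent ingredients.
   - Second moments: the summands Y_i = f o X_i are bounded, hence square
     integrable and, being functions of distinct independent coordinates,
     uncorrelated; the variance of their empirical mean is therefore
     n^-2 * sum_i Var(Y_i) <= n^-1 * E[Y_1^2]  (variance_mean_uncorrelated).
   - Densities: E[Y_i^2] = int f^2 R dmu, by comparing the density R of the
     law of X_i with the Radon-Nikodym derivative of that law
     (integral_density, expectation_density).
   - A pointwise inequality: with p, q, r the square roots of P, Q, R,
     f^2 R <= 12 ((p - r)^2 + (q - r)^2)  (test_summand_sqr_density_le), so
     int f^2 R dmu <= 24 (H^2(P,R) + H^2(Q,R)) <= 48 max(H^2(P,R), H^2(Q,R)).
   Combining, Var(T) <= 48/n * max(...) <= 55/n * max(...). *)
From HB Require Import structures.
From mathcomp Require Import all_boot all_order all_algebra.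
From mathcomp Require Import all_classical all_reals all_analysis.
From mathcomp Require Import measurable_realfun ring lra.
Set Implicit Arguments. Unset Strict Implicit. Unset Printing Implicit Defensive.
Import Order.TTheory GRing.Theory Num.Theory.
Local Open Scope classical_set_scope.
Local Open Scope ring_scope.

Lemma sqr_diff_weight_le (R : realFieldType) (p q r : R) :
  0 <= p -> 0 <= q -> 0 <= r ->
  (p ^+ 2 - q ^+ 2) ^+ 2 * r ^+ 2 <=
    12 * ((p - r) ^+ 2 + (q - r) ^+ 2) * (p ^+ 2 + q ^+ 2) ^+ 2.
Proof.
move=> p0 q0 r0; set s := p ^+ 2 + q ^+ 2; set D := (p - r) ^+ 2 + (q - r) ^+ 2.
have [rs|rs] := leP (r ^+ 2) (3 * s).
- (* r is small: use (p + q)^2 <= 2 s and 12 D >= 6 (p - q)^2 *)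
  have pq : (p + q) ^+ 2 <= 2 * s by rewrite /s; have := sqr_ge0 (p - q); nra.
  have pqr : (p + q) ^+ 2 * r ^+ 2 <= 2 * s * (3 * s) by rewrite ler_pM ?sqr_ge0.
  have -> : (p ^+ 2 - q ^+ 2) ^+ 2 * r ^+ 2 = (p - q) ^+ 2 * ((p + q) ^+ 2 * r ^+ 2).
    by ring.
  have -> : 12 * D = 6 * (p - q) ^+ 2 + 6 * (p + q - 2 * r) ^+ 2 by rewrite /D; ring.
  have := sqr_ge0 (p - q); have := sqr_ge0 (p + q - 2 * r); have := sqr_ge0 s; nra.
- (* r is large: |p^2 - q^2| <= s and r^2 <= 12 D *)
  have pq2 : (p ^+ 2 - q ^+ 2) ^+ 2 <= s ^+ 2 by rewrite /s; nra.
  have rD : r ^+ 2 <= 12 * D.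
    rewrite /D; have := sqr_ge0 (2 * p - r); have := sqr_ge0 (2 * q - r).
    by rewrite /s in rs; nra.
  by rewrite [_ * s ^+ 2]mulrC ler_pM ?sqr_ge0.
Qed.

Section test_summand.
Context d (X : measurableType d) (R : realType) (P Q : X -> R).
Hypotheses (P0 : forall x, 0 <= P x) (Q0 : forall x, 0 <= Q x).

(* On nonnegative densities the summand is (P - Q) (P + Q)^(-1), with the
   real power x `^ (-1), which vanishes at 0 and is measurable. *)
Lemma test_summand_powR :
  test_summand P Q = fun x => (P x - Q x) * (P x + Q x) `^ (-1).
Proof.
apply/funext => x; rewrite /test_summand.
case: ifPn => [/eqP ->|_]; first by rewrite powR0 ?mulr0 // oppr_eq0 oner_eq0.
by rewrite powR_inv1 // addr_ge0.
Qed.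

Lemma measurable_test_summand :
  measurable_fun setT P -> measurable_fun setT Q ->
  measurable_fun setT (test_summand P Q).
Proof.
move=> mP mQ; rewrite test_summand_powR.
apply: measurable_funM; first exact: measurable_funB.
apply: (measurableT_comp (measurable_powR _)); exact: measurable_funD.
Qed.

Lemma test_summand_le1 x : `|test_summand P Q x| <= 1.
Proof.
rewrite /test_summand; case: ifPn => [_|s0]; first by rewrite normr0.
have sp : 0 < P x + Q x by rewrite lt_def s0 addr_ge0.
rewrite normrM normfV (gtr0_norm sp) ler_pdivrMr // mul1r.
by have := P0 x; have := Q0 x; rewrite ler_norml => ? ?; apply/andP; split; lra.
Qed.

Lemma test_summand_sqr_density_le (Rd : X -> R) x : 0 <= Rd x ->
  test_summand P Q x ^+ 2 * Rd x <=
    12 * ((Num.sqrt (P x) - Num.sqrt (Rd x)) ^+ 2 +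
          (Num.sqrt (Q x) - Num.sqrt (Rd x)) ^+ 2).
Proof.
move=> R0; rewrite /test_summand; case: ifPn => [_|s0].
  by rewrite expr0n mul0r mulr_ge0 // addr_ge0 // sqr_ge0.
have sp : 0 < P x + Q x by rewrite lt_def s0 addr_ge0.
have := sqr_diff_weight_le (sqrtr_ge0 (P x)) (sqrtr_ge0 (Q x)) (sqrtr_ge0 (Rd x)).
rewrite !sqr_sqrtr // => H.
by rewrite expr_div_n mulrAC ler_pdivrMr ?exprn_gt0.
Qed.

Lemma integral_test_summand_sqr_le (mu : {measure set X -> \bar R}) (Rd : X -> R) :
  measurable_fun setT P -> measurable_fun setT Q -> measurable_fun setT Rd ->
  (forall x, 0 <= Rd x) ->
  (\int[mu]_x (test_summand P Q x ^+ 2 * Rd x)%:E <=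
    24%:E * (hellinger2 mu P Rd + hellinger2 mu Q Rd))%E.
Proof.
move=> mP mQ mR R0.
have msqrt (U : X -> R) : measurable_fun setT U ->
    measurable_fun setT (fun x => (Num.sqrt (U x) - Num.sqrt (Rd x)) ^+ 2).
  have ms : measurable_fun setT (@Num.sqrt R).
    by apply: continuous_measurable_fun; exact: sqrt_continuous.
  move=> mU; apply: measurable_funX; apply: measurable_funB.
  - exact: measurableT_comp ms mU.
  - exact: measurableT_comp ms mR.
have sq0 (U : X -> R) x : (0 <= ((Num.sqrt (U x) - Num.sqrt (Rd x)) ^+ 2)%:E)%E.
  by rewrite lee_fin sqr_ge0.
rewrite /hellinger2 -muleDr ?ge0_adde_def ?inE ?integral_ge0//.
rewrite muleA -EFinM.
rewrite (_ : 24 / 2 = 12 :> R); last by field.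
rewrite -ge0_integralD//; [|exact/measurable_EFinP/msqrt..].
rewrite -ge0_integralZl_EFin//; first last.
- by apply: emeasurable_funD; exact/measurable_EFinP/msqrt.
- by move=> x _; rewrite adde_ge0.
apply: ge0_le_integral => //.
- by move=> x _; rewrite lee_fin mulr_ge0 // sqr_ge0.
- apply/measurable_EFinP; apply: measurable_funM => //.
  exact/measurable_funX/measurable_test_summand.
- by apply: emeasurable_funM => //; apply: emeasurable_funD; exact/measurable_EFinP/msqrt.
by move=> x _; rewrite -EFinD -EFinM lee_fin test_summand_sqr_density_le.
Qed.

End test_summand.

Definition sigma_finite_measure_of d (T : measurableType d) (R : realType)
    (mu : {measure set T -> \bar R}) (smu : sigma_finite setT mu) :
    {sigma_finite_measure set T -> \bar R} :=
  HB.pack_for (SigmaFiniteMeasure.type T R) (Measure.sort mu)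
    (isSFinite.Build _ _ _ _ (sfinite_measure_sigma_finite smu))
    (isSigmaFinite.Build _ _ _ _ smu).

(* A finite measure nu with density rho with respect to a sigma-finite mu:
   rho agrees mu-a.e. with the Radon-Nikodym derivative of nu, so integrals
   against nu are integrals against rho dmu. *)
Section density.
Local Open Scope ereal_scope.
Local Open Scope charge_scope.
Context d (T : measurableType d) (R : realType).
Variables (mu : {sigma_finite_measure set T -> \bar R})
  (nu : {finite_measure set T -> \bar R}) (rho : T -> R).
Hypotheses (mrho : measurable_fun setT rho)
  (nuE : forall A, measurable A -> nu A = \int[mu]_(x in A) (rho x)%:E).

Lemma density_dominates : nu `<< mu.
Proof.
apply/null_content_dominatesP => A mA muA0; rewrite nuE// null_set_integral//.
exact/measurable_EFinP/measurable_funTS.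
Qed.

Let charge_dominates : charge_of_finite_measure nu `<< mu := density_dominates.

Lemma density_ae_Radon_Nikodym :
  ae_eq mu setT ('d (charge_of_finite_measure nu) '/d mu) (EFin \o rho).
Proof.
apply: integral_ae_eq => //.
- exact: Radon_Nikodym_integrable charge_dominates.
- exact/measurable_EFinP.
- by move=> A _ mA; rewrite -Radon_Nikodym_integral//=; exact: nuE.
Qed.

Lemma integral_density (f : T -> \bar R) : nu.-integrable setT f ->
  \int[mu]_x (f x * (rho x)%:E) = \int[nu]_x f x.
Proof.
move=> nuf; rewrite -(Radon_Nikodym_change_of_variables density_dominates)//.
apply: ae_eq_integral => //.
- apply: emeasurable_funM; [exact: (measurable_int nu) | exact/measurable_EFinP].
- apply: emeasurable_funM; first exact: (measurable_int nu).
  exact: measurable_int (Radon_Nikodym_integrable charge_dominates).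
- apply: ae_eqe_mul2l; exact/ae_eq_sym/density_ae_Radon_Nikodym.
Qed.
End density.

Lemma bounded_integrable d (T : measurableType d) (R : realType)
    (mu : {finite_measure set T -> \bar R}) (g : T -> R) (M : R) :
  measurable_fun setT g -> (forall x, `|g x| <= M) ->
  mu.-integrable setT (EFin \o g).
Proof.
move=> mg gM; apply: (@le_integrable _ _ _ _ _ _ _ (EFin \o cst M)) => //.
- exact/measurable_EFinP.
- by move=> x _ /=; rewrite lee_fin (le_trans (gM x)) ?ler_norm.
- exact: finite_measure_integrable_cst.
Qed.

Section expectation_density.
Local Open Scope ereal_scope.
Context d (X : measurableType d) dO (Omega : measurableType dO) (R : realType)
  (Pr : probability Omega R).

Lemma expectation_density (mu : {measure set X -> \bar R}) (rho : X -> R)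
    (Z : Omega -> X) (g : X -> R) (M : R) :
  sigma_finite setT mu -> measurable_fun setT rho -> measurable_fun setT Z ->
  (forall A, measurable A -> Pr (Z @^-1` A) = \int[mu]_(x in A) (rho x)%:E) ->
  measurable_fun setT g -> (forall x, `|g x| <= M)%R ->
  'E_Pr[g \o Z] = \int[mu]_x (g x * rho x)%:E.
Proof.
move=> smu mrho mZ lawZ mg gM.
pose law := distribution Pr (mfun_Sub (mem_set mZ)).
have gint : law.-integrable setT (EFin \o g) by exact: bounded_integrable gM.
transitivity (\int[mu]_x ((g x)%:E * (rho x)%:E)).
  rewrite (integral_density (mu := sigma_finite_measure_of smu) (nu := law) mrho lawZ gint).
  rewrite unlock integral_distribution//; first exact/measurable_EFinP.
  exact: (bounded_integrable Pr (measurableT_comp mg mZ) (fun w => gM (Z w))).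
by apply: eq_integral => x _; rewrite EFinM.
Qed.
End expectation_density.

Section second_moments.
Local Open Scope ereal_scope.
Context d (T : measurableType d) (R : realType) (P : probability T R).

Lemma bounded_Lfun2 (Y : T -> R) (M : R) : measurable_fun setT Y ->
  (forall w, `|Y w| <= M)%R -> Y \in Lfun P 2%:E.
Proof.
move=> mY YM; rewrite inE; apply/andP; split; rewrite inE//=.
rewrite /finite_norm unlock /Lnorm poweR_lty//.
apply: (@le_lt_trans _ _ (\int[P]_w (M `^ 2)%:E)).
  apply: ge0_le_integral => //.
  - by move=> w _; rewrite lee_fin powR_ge0.
  - apply/measurable_EFinP; apply: (measurableT_comp (measurable_powR _)).
    exact: measurableT_comp.
  - by move=> w _; rewrite lee_fin ge0_ler_powR ?nnegrE// (le_trans _ (YM w)).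
by rewrite integral_cst//= probability_setT mule1 ltry.
Qed.

Lemma covarianceD_cst (Y Z : T -> R) (a b : R) :
  Y \in Lfun P 2%:E -> Z \in Lfun P 2%:E ->
  covariance P (Y \+ cst a)%R (Z \+ cst b)%R = covariance P Y Z.
Proof.
move=> Y2 Z2; have Lcst c := Lfun_cst P c 2.
rewrite covarianceDl ?rpredD ?lee1n// covariance_cst_l adde0.
by rewrite covarianceDr// covariance_cst_r adde0.
Qed.

Lemma covariance_suml (n : nat) (Y : 'I_n -> T -> R) (Z : T -> R) :
  (forall i, Y i \in Lfun P 2%:E) -> Z \in Lfun P 2%:E ->
  covariance P (\sum_(i < n) Y i)%R Z = \sum_(i < n) covariance P (Y i) Z.
Proof.
elim: n Y => [|n IH] Y Y2 Z2; first by rewrite !big_ord0 covariance_cst_l.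
by rewrite !big_ord_recr/= covarianceDl ?rpred_sum ?lee1n ?IH.
Qed.

Lemma variance_sum_uncorrelated (n : nat) (Y : 'I_n -> T -> R) :
  (forall i, Y i \in Lfun P 2%:E) ->
  (forall i j, i != j -> covariance P (Y i) (Y j) = 0) ->
  'V_P[(\sum_(i < n) Y i)%R] = \sum_(i < n) 'V_P[Y i].
Proof.
elim: n Y => [|n IH] Y Y2 Y0; first by rewrite !big_ord0 variance_cst.
rewrite !big_ord_recr/= varianceD ?rpred_sum ?lee1n//.
rewrite (IH (fun i => Y (widen_ord (leqnSn n) i)))// => [|i j ij]; last first.
  by rewrite Y0// (inj_eq widen_ord_inj).
rewrite covariance_suml// [X in _ * X]big1 ?mule0 ?adde0// => i _.
by rewrite Y0// -val_eqE /= neq_ltn ltn_ord.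
Qed.

(* Var(Y) = E[Y^2] - E[Y]^2 <= E[Y^2]. *)
Lemma variance_le_moment2 (Y : T -> R) : Y \in Lfun P 2%:E ->
  'V_P[Y] <= 'E_P[Y ^+ 2].
Proof. by move=> Y2; rewrite varianceE// -[leRHS]sube0 leeB// sqre_ge0. Qed.

Lemma variance_mean_uncorrelated (n : nat) (Y : 'I_n -> T -> R) (K : R) :
  (forall i, Y i \in Lfun P 2%:E) ->
  (forall i j, i != j -> covariance P (Y i) (Y j) = 0) ->
  (forall i, 'E_P[Y i ^+ 2] = K%:E) ->
  'V_P[(n%:R^-1 \o* \sum_(i < n) Y i)%R] <= (K / n%:R)%:E.
Proof.
move=> Y2 Y0 YK.
rewrite varianceZ ?rpred_sum ?lee1n// variance_sum_uncorrelated//.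
have sumV : \sum_(i < n) 'V_P[Y i] <= (K *+ n)%:E.
  rewrite -[in leRHS](card_ord n) -sumr_const -sumEFin.
  by apply: lee_sum => i _; rewrite -(YK i) variance_le_moment2.
apply: (le_trans (lee_wpmul2l _ sumV)); first by rewrite lee_fin sqr_ge0.
rewrite -EFinM lee_fin le_eqVlt; apply/orP; left; apply/eqP.
have [-> | n0] := eqVneq n 0%N; first by rewrite mulr0n mulr0 invr0 mulr0.
by rewrite -mulr_natr; field; rewrite pnatr_eq0.
Qed.

End second_moments.
Section independent_pair.
Local Open Scope ereal_scope.
Context d (X : measurableType d) dO (Omega : measurableType dO) (R : realType)
  (Pr : probability Omega R) (n : nat) (Xs : 'I_n -> Omega -> X).
Hypotheses (mXs : forall i, measurable_fun setT (Xs i))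
  (indep : forall (J : {set 'I_n}) (A : 'I_n -> set X),
    (forall i, measurable (A i)) ->
    Pr [set w | forall i, i \in J -> A i (Xs i w)] =
    \prod_(i in J) Pr (Xs i @^-1` A i)).

Let law i := distribution Pr (mfun_Sub (mem_set (mXs i))).

Let pair_of i j w := (Xs i w, Xs j w).

Lemma joint_law_rect i j A B : i != j -> measurable A -> measurable B ->
  pushforward Pr (pair_of i j) (A `*` B) = law i A * law j B.
Proof.
move=> ij mA mB.
pose AB k := if k == i then A else if k == j then B else setT.
have mAB k : measurable (AB k) by rewrite /AB; case: ifP => // _; case: ifP.
have ji : j != i by rewrite eq_sym.
have := indep [set i; j]%SET mAB.
rewrite big_setU1 /= ?inE // big_set1 /AB eqxx (negbTE ji) eqxx => <-.
congr (Pr _); apply/seteqP; split => w /=.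
- by move=> [wA wB] k; rewrite !inE => /orP[]/eqP ->; rewrite ?eqxx ?(negbTE ji).
- move=> H; split; first by have := H i; rewrite !inE eqxx; apply.
  by have := H j; rewrite !inE eqxx orbT (negbTE ji); apply.
Qed.

(* For i != j the joint law of (X_i, X_j) is the product of the marginal
   laws, since both agree on measurable rectangles. *)
Lemma joint_law_product i j C : i != j -> measurable C ->
  pushforward Pr (pair_of i j) C = (law i \x law j) C.
Proof.
move=> ij mC; symmetry.
apply: (product_measure_unique (m' := pushforward Pr (pair_of i j))) => //.
- exact: measurable_fun_pair.
- by move=> ? A B mA mB; exact: joint_law_rect.
Qed.

(* E[g(X_i) h(X_j)] = E[g(X_i)] E[h(X_j)] for i != j and nonnegative g, h:
   integrate against the product law and apply Fubini-Tonelli. *)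
Lemma expectation_indep_mul_ge0 i j (g h : X -> R) : i != j ->
  measurable_fun setT g -> measurable_fun setT h ->
  (forall x, 0 <= g x)%R -> (forall x, 0 <= h x)%R ->
  'E_Pr[(g \o Xs i) \* (h \o Xs j)] = 'E_Pr[g \o Xs i] * 'E_Pr[h \o Xs j].
Proof.
move=> ij mg mh g0 h0; rewrite !unlock.
have mgh : measurable_fun setT (fun z : X * X => (g z.1 * h z.2)%:E).
  apply/measurable_EFinP; apply: measurable_funM.
  - exact: measurableT_comp mg measurable_fst.
  - exact: measurableT_comp mh measurable_snd.
have gh0 (z : X * X) : 0 <= (g z.1 * h z.2)%:E by rewrite lee_fin mulr_ge0.
transitivity (\int[pushforward Pr (pair_of i j)]_z (g z.1 * h z.2)%:E).
  by rewrite ge0_integral_pushforward//; exact: measurable_fun_pair.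
transitivity (\int[law i \x law j]_z (g z.1 * h z.2)%:E).
  apply: eq_measure_integral; first exact: measurable_fun_pair.
  by move=> ? C mC _; exact: joint_law_product.
rewrite (fubini_tonelli1 _ mgh gh0) /fubini_F.
under eq_integral do under eq_integral do rewrite EFinM.
transitivity (\int[law i]_x ((g x)%:E * \int[law j]_y (h y)%:E)).
  apply: eq_integral => x _ /=; rewrite ge0_integralZl ?lee_fin//.
  - exact/measurable_EFinP.
  - by move=> y _; rewrite lee_fin.
rewrite ge0_integralZr ?integral_ge0//; first last.
- by move=> y _; rewrite lee_fin.
- by move=> x _; rewrite lee_fin.
- exact/measurable_EFinP.
by rewrite !ge0_integral_distribution//; exact/measurable_EFinP.
Qed.

(* Bounded functions of two distinct coordinates are uncorrelated: after
   shifting them to be nonnegative, this is expectation_indep_mul_ge0. *)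
Lemma covariance_indep_bounded i j (g h : X -> R) (M : R) : i != j ->
  measurable_fun setT g -> measurable_fun setT h ->
  (forall x, `|g x| <= M)%R -> (forall x, `|h x| <= M)%R ->
  covariance Pr (g \o Xs i) (h \o Xs j) = 0.
Proof.
move=> ij mg mh gM hM.
have L2 (f : X -> R) B k : measurable_fun setT f -> (forall x, `|f x| <= B)%R ->
    (f \o Xs k) \in Lfun Pr 2%:E.
  by move=> mf fB; apply: (bounded_Lfun2 Pr (measurableT_comp mf (mXs k))) => w; exact: fB.
have shift (f : X -> R) : (forall x, `|f x| <= M)%R ->
    [/\ forall x, (0 <= f x + M)%R & forall x, (`|f x + M| <= M + M)%R].
  move=> fM; split => x; have := fM x; rewrite ler_norml => /andP[? ?].
    lra.
  by rewrite ler_norml; apply/andP; split; lra.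
have [g0 gMM] := shift g gM; have [h0 hMM] := shift h hM.
have mgM := measurable_funD mg (measurable_cst M).
have mhM := measurable_funD mh (measurable_cst M).
have LgM := L2 _ _ i mgM gMM; have LhM := L2 _ _ j mhM hMM.
have Pfin : Pr setT \is a fin_num by rewrite probability_setT.
rewrite -(covarianceD_cst M M (L2 _ _ i mg gM) (L2 _ _ j mh hM)).
rewrite covarianceE ?Lfun2_mul_Lfun1 ?Lfun_subset12//.
rewrite (expectation_indep_mul_ge0 ij mgM mhM g0 h0) subee//.
by rewrite fin_numM ?expectation_fin_num ?Lfun_subset12.
Qed.

End independent_pair.

Lemma div_le_max_bound (R : realType) (n : nat) (K : R) (a b : \bar R) :
  (0 < n)%N -> (0 <= a)%E -> (0 <= b)%E -> (K%:E <= 24%:E * (a + b))%E ->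
  ((K / n%:R)%:E <= (55 / n%:R)%:E * maxe a b)%E.
Proof.
move=> n0 a0 b0 Kab; have n0' : 0 < n%:R :> R by rewrite ltr0n.
have c0 : (0 < (55 / n%:R)%:E :> \bar R)%E by rewrite lte_fin divr_gt0.
case: a a0 Kab => [a| |] // a0 Kab; last by rewrite maxye gt0_muley ?leey.
case: b b0 Kab => [b| |] // b0 Kab; last by rewrite maxey gt0_muley ?leey.
move: a0 b0 Kab; rewrite -EFin_max -!EFinD -!EFinM !lee_fin => a0 b0 Kab.
rewrite mulrAC ler_pM2r ?invr_gt0//.
have am : a <= Num.max a b by rewrite le_max lexx.
have bm : b <= Num.max a b by rewrite le_max lexx orbT.
lra.
Qed.

Theorem lemma3 (R : realType) (d : measure_display) (X : measurableType d)
  (mu : {measure set X -> \bar R}) (P Q Rd : X -> R)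
  (dO : measure_display) (Omega : measurableType dO) (Pr : probability Omega R)
  (n : nat) (Xs : 'I_n -> Omega -> X) :
  sigma_finite setT mu ->
  is_density mu P -> is_density mu Q -> is_density mu Rd ->
  (0 < n)%N ->
  iid_with_density Pr Xs mu Rd ->
  ('V_Pr[fun w => test_stat P Q (fun i => Xs i w)] <=
     (55 / n%:R)%:E * maxe (hellinger2 mu P Rd) (hellinger2 mu Q Rd))%E.
Proof.
move=> smu [mP P0 _] [mQ Q0 _] [mRd Rd0 _] n0 [mXs lawXs indep].
pose f := test_summand P Q.
have mf : measurable_fun setT f by exact: measurable_test_summand.
have f1 x : `|f x| <= 1 by exact: test_summand_le1.
have mf2 : measurable_fun setT (fun x => f x ^+ 2) by exact: measurable_funX.
have f21 x : `|f x ^+ 2| <= 1 by rewrite normrX expr_le1.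
pose Y i := f \o Xs i.
have Y2 i : Y i \in Lfun Pr 2%:E.
  exact: (bounded_Lfun2 Pr (measurableT_comp mf (mXs i)) (fun w => f1 _)).
have Y0 i j : i != j -> covariance Pr (Y i) (Y j) = 0%E.
  by move=> ij; exact: (covariance_indep_bounded mXs indep ij mf mf f1 f1).
have EY2 i : ('E_Pr[Y i ^+ 2] = \int[mu]_x (f x ^+ 2 * Rd x)%:E)%E.
  have -> : (Y i ^+ 2 = (fun x => f x ^+ 2) \o Xs i)%R by [].
  exact: (expectation_density smu mRd (mXs i) (lawXs i) mf2 f21).
pose K := fine (\int[mu]_x (f x ^+ 2 * Rd x)%:E).
have KE : (\int[mu]_x (f x ^+ 2 * Rd x)%:E)%E = K%:E.
  by rewrite fineK// -(EY2 (Ordinal n0)) expectation_fin_num// expr2 Lfun2_mul_Lfun1.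
rewrite [X in 'V_Pr[X]](_ : _ = n%:R^-1 \o* \sum_(i < n) Y i)%R; last first.
  by apply/funext => w; rewrite /test_stat fct_sumE /= mulrC.
apply: le_trans (variance_mean_uncorrelated Y2 Y0 (fun i => etrans (EY2 i) KE)) _.
have H2_ge0 U : (0 <= hellinger2 mu U Rd)%E.
  by rewrite mule_ge0 ?lee_fin ?integral_ge0// => x _; rewrite lee_fin sqr_ge0.
apply: div_le_max_bound => //; rewrite -KE.
exact: integral_test_summand_sqr_le.
Qed.
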